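(* Let $G$ be a commutative group, $H$ its torsion subgroup, and $U\subset G$ a nonempty finite set. If $U$ is contained in a single coset of $H$, then \[ \alpha(U)=\alpha'(U)=\alpha''(U)=\beta(U)=\beta'(U)=\beta''(U)=1; \] otherwise $\beta(U)\ge2$ and $\alpha(U)\ge3/2$.
   Context: With $A,B$ ranging over nonempty finite subsets of $G$: $\alpha(U)=\inf_{A\supset U,B\supset U}\frac{|A+B|}{\sqrt{|A||B|}}$; $\alpha'(U)=\inf_{A\supset U,B\supset U,|A|=|B|}\frac{|A+B|}{|A|}$; $\alpha''(U)=\inf_{A\supset U}\frac{|A+A|}{|A|}$; $\beta(U)=\inf_{A,B}\frac{|A+B+U|}{\sqrt{|A||B|}}$; $\beta'(U)=\inf_{A,B,|A|=|B|}\frac{|A+B+U|}{\sqrt{|A||B|}}$; $\beta''(U)=\inf_A\frac{|A+A+U|}{|A|}$. *)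

From HB Require Import structures.
From mathcomp Require Import all_boot all_order all_algebra.
From mathcomp Require Import finmap.
From mathcomp Require Import boolp classical_sets reals.
Set Implicit Arguments. Unset Strict Implicit. Unset Printing Implicit Defensive.
Import Order.TTheory GRing.Theory Num.Theory.
Local Open Scope ring_scope.
Local Open Scope fset_scope.

Definition sumset (G : zmodType) (A B : {fset G}) : {fset G} :=
  [fset (a + b)%R | a in A, b in B].

Definition torsion (G : zmodType) (x : G) : Prop :=
  exists n : nat, (0 < n)%N /\ x *+ n = 0.

Section Const.
Variables (R : realType) (G : zmodType).
Local Open Scope classical_set_scope.

Definition card_r (A : {fset G}) : R := (#|` A|)%:R.

Definition alpha (U : {fset G}) : R :=
  inf [set r : R | exists A B : {fset G}, [/\ A != fset0, B != fset0,
     fsubset U A, fsubset U B &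
     r = card_r (sumset A B) / Num.sqrt (card_r A * card_r B)]].

Definition alpha' (U : {fset G}) : R :=
  inf [set r : R | exists A B : {fset G}, [/\ A != fset0, B != fset0,
     fsubset U A, fsubset U B &
     (#|` A| = #|` B|)%N /\ r = card_r (sumset A B) / card_r A]].

Definition alpha'' (U : {fset G}) : R :=
  inf [set r : R | exists A : {fset G}, [/\ A != fset0, fsubset U A &
     r = card_r (sumset A A) / card_r A]].

Definition beta (U : {fset G}) : R :=
  inf [set r : R | exists A B : {fset G}, [/\ A != fset0, B != fset0 &
     r = card_r (sumset (sumset A B) U) / Num.sqrt (card_r A * card_r B)]].

Definition beta' (U : {fset G}) : R :=
  inf [set r : R | exists A B : {fset G}, [/\ A != fset0, B != fset0,
     (#|` A| = #|` B|)%N &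
     r = card_r (sumset (sumset A B) U) / Num.sqrt (card_r A * card_r B)]].

Definition beta'' (U : {fset G}) : R :=
  inf [set r : R | exists A : {fset G}, A != fset0 /\
     r = card_r (sumset (sumset A A) U) / card_r A].
End Const.

(* If every u - g is torsion, U lies in a coset g + K of a finite subgroup K, and
   A = g + K (for the alpha's) or A = B = K (for the beta's) make the ratio 1, while
   |A + B| >= max(|A|, |B|) bounds every ratio below by 1.
   Otherwise some x = u1 - u0 with u0, u1 in U has infinite order.  Cut a finite set
   into fibers, its intersections with cosets of <x>; a set E inside one coset behaves
   like a set of integers, so |E + F| >= |E| + |F| - 1 for such E and F.  Summing over
   the fibers of B, (N + |E| - 1) |B| <= N |E + B| when E lies in one coset and every
   fiber of B has at most N elements.  With E the largest fiber of A (of size M) and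
   N the size of the largest fiber of B, this and its mirror image multiply to
   (M + N - 1)^2 |A| |B| <= M N |A + B|^2.  For alpha, u0 and u1 force M, N >= 2, so
   (M + N - 1)^2 >= 9 M N / 4.  For beta, E = (fiber of A) + {u0, u1} has M + 1
   elements, giving (M + N)^2 |A| |B| <= M N |A + B + U|^2 and (M + N)^2 >= 4 M N. *)

From HB Require Import structures.
From mathcomp Require Import all_boot all_order all_algebra.
From mathcomp Require Import finmap.
From mathcomp Require Import boolp classical_sets reals.
From mathcomp Require Import zify.
Set Implicit Arguments. Unset Strict Implicit. Unset Printing Implicit Defensive.
Import Order.TTheory GRing.Theory Num.Theory.
Local Open Scope fset_scope.
Local Open Scope ring_scope.

Lemma fset_neq0 (T : choiceType) (A : {fset T}) a : a \in A -> A != fset0.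
Proof. by move=> aA; apply/fset0Pn; exists a. Qed.

Section Sumset.
Variable G : zmodType.
Implicit Types (A B C : {fset G}) (g : G).

Lemma sumsetP A B z :
  reflect (exists2 a, a \in A & exists2 b, b \in B & z = a + b) (z \in sumset A B).
Proof. exact: imfset2P. Qed.

Lemma mem_sumset A B a b : a \in A -> b \in B -> a + b \in sumset A B.
Proof. by move=> aA bB; apply/sumsetP; exists a => //; exists b. Qed.

Lemma sumsetS A A' B B' :
  fsubset A A' -> fsubset B B' -> fsubset (sumset A B) (sumset A' B').
Proof.
move=> /fsubsetP sAA' /fsubsetP sBB'; apply/fsubsetP => _ /sumsetP[a aA [b bB ->]].
by apply: mem_sumset; [apply: sAA' | apply: sBB'].
Qed.

Lemma sumsetC A B : sumset A B = sumset B A.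
Proof.
by apply/fsetP => z; apply/sumsetP/sumsetP => -[a aA [b bB ->]];
  exists b => //; exists a => //; rewrite addrC.
Qed.

Lemma sumsetAC A B C : sumset (sumset A B) C = sumset (sumset A C) B.
Proof.
apply/fsetP => z; apply/sumsetP/sumsetP => -[_ /sumsetP[a aA [b bB ->]] [c cC ->]];
  by exists (a + c); rewrite ?mem_sumset //; exists b; rewrite // addrAC.
Qed.

Definition translate g A : {fset G} := [fset g + a | a in A].

Lemma card_translate g A : #|` translate g A| = #|` A|.
Proof. by rewrite card_imfset //; apply: addrI. Qed.

Lemma leq_card_sumsetl A B b : b \in B -> (#|` A| <= #|` sumset A B|)%N.
Proof.
move=> bB; rewrite -(card_translate b) fsubset_leq_card //.
by apply/fsubsetP => _ /imfsetP[a aA ->]; rewrite addrC mem_sumset.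
Qed.

Lemma leq_card_sumsetr A B a : a \in A -> (#|` B| <= #|` sumset A B|)%N.
Proof. by rewrite sumsetC; apply: leq_card_sumsetl. Qed.

Lemma card_sumset_sqr A B :
  A != fset0 -> B != fset0 -> (#|` A| * #|` B| <= #|` sumset A B| ^ 2)%N.
Proof.
move=> /fset0Pn[a aA] /fset0Pn[b bB]; rewrite expnS expn1.
by apply: leq_mul; [apply: leq_card_sumsetl bB | apply: leq_card_sumsetr aA].
Qed.

Lemma card_sumset3_sqr A B U : A != fset0 -> B != fset0 -> U != fset0 ->
  (#|` A| * #|` B| <= #|` sumset (sumset A B) U| ^ 2)%N.
Proof.
move=> An0 Bn0 /fset0Pn[u uU]; apply: leq_trans (card_sumset_sqr An0 Bn0) _.
by rewrite leq_exp2r // (leq_card_sumsetl _ uU).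
Qed.

End Sumset.

Section Torsion.
Variable G : zmodType.
Implicit Types (K U : {fset G}) (g x : G).

Lemma mulrn_modn x n m : x *+ n = 0 -> x *+ m = x *+ (m %% n).
Proof. by move=> xn0; rewrite {1}(divn_eq m n) mulrnDr mulnC mulrnA xn0 mul0rn add0r. Qed.

Definition multiples x n : {fset G} := [fset x *+ i | i in iota 0 n].

Lemma mem_multiples x n m : (0 < n)%N -> x *+ n = 0 -> x *+ m \in multiples x n.
Proof.
move=> n_gt0 xn0; rewrite (mulrn_modn m xn0); apply/imfsetP.
by exists (m %% n)%N; rewrite //= mem_iota add0n ltn_pmod.
Qed.

Definition fsubmonoid K : Prop := 0 \in K /\ {in K &, forall a b, a + b \in K}.

Lemma multiples_fsubmonoid x n : (0 < n)%N -> x *+ n = 0 -> fsubmonoid (multiples x n).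
Proof.
move=> n_gt0 xn0; split; first by rewrite -(mulr0n x) mem_multiples.
by move=> _ _ /imfsetP[i _ ->] /imfsetP[j _ ->]; rewrite -mulrnDr mem_multiples.
Qed.

Lemma sumset_fsubmonoid K K' :
  fsubmonoid K -> fsubmonoid K' -> fsubmonoid (sumset K K').
Proof.
move=> [K0 KD] [K'0 K'D]; split; first by rewrite -[0]addr0 mem_sumset.
move=> _ _ /sumsetP[a aK [b bK' ->]] /sumsetP[a' a'K [b' b'K' ->]].
by rewrite addrACA mem_sumset ?KD ?K'D.
Qed.

Lemma torsion_fsubmonoid_hull (s : seq G) : {in s, forall u, torsion u} ->
  exists2 K, fsubmonoid K & {subset s <= K}.
Proof.
elim: s => [|y s IHs] s_tors.
  exists [fset 0]; last by [].
  by split=> [|a b]; rewrite !inE // => /eqP-> /eqP->; rewrite addr0.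
have [K Kmon sK] : exists2 K, fsubmonoid K & {subset s <= K}.
  by apply: IHs => u us; apply: s_tors; rewrite inE us orbT.
have [n [n_gt0 yn0]] : torsion y by apply: s_tors; rewrite inE eqxx.
exists (sumset K (multiples y n)).
  exact: sumset_fsubmonoid (multiples_fsubmonoid n_gt0 yn0).
move=> u; rewrite inE => /predU1P[->|us].
  rewrite -[X in X \in _](add0r y) mem_sumset ?Kmon.1 //.
  by rewrite -[X in X \in _]mulr1n mem_multiples.
by rewrite -[u]addr0 mem_sumset ?sK // (multiples_fsubmonoid n_gt0 yn0).1.
Qed.

Lemma torsion_coset_hull U g : {in U, forall u, torsion (u - g)} ->
  exists2 K, fsubmonoid K & fsubset U (translate g K).
Proof.
move=> Ug; have [|K Kmon sK] := @torsion_fsubmonoid_hull [seq u - g | u <- enum_fset U].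
  by move=> _ /mapP[u uU ->]; apply: Ug.
exists K => //; apply/fsubsetP => u uU; apply/imfsetP; exists (u - g).
  by apply: sK; apply/mapP; exists u.
by rewrite addrC subrK.
Qed.

Lemma card_sumset_translate_fsubmonoid K g : fsubmonoid K ->
  #|` sumset (translate g K) (translate g K)| = #|` translate g K|.
Proof.
case=> K0 KD; have gA : g \in translate g K by apply/imfsetP; exists 0; rewrite ?addr0.
apply/eqP; rewrite eqn_leq (leq_card_sumsetl _ gA) andbT.
rewrite card_translate -(card_translate (g + g) K) fsubset_leq_card //.
apply/fsubsetP => _ /sumsetP[_ /imfsetP[a aK ->] [_ /imfsetP[b bK ->] ->]].
by apply/imfsetP; exists (a + b); rewrite ?KD // addrACA.
Qed.

Lemma card_sumset3_fsubmonoid K g U : fsubmonoid K -> U != fset0 ->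
  fsubset U (translate g K) -> #|` sumset (sumset K K) U| = #|` K|.
Proof.
case=> K0 KD /fset0Pn[u uU] /fsubsetP UgK; apply/eqP; rewrite eqn_leq.
rewrite (leq_trans (leq_card_sumsetl _ K0) (leq_card_sumsetl _ uU)) andbT.
rewrite -(card_translate g K) fsubset_leq_card //.
apply/fsubsetP => _ /sumsetP[_ /sumsetP[a aK [b bK ->]] [v /UgK/imfsetP[c cK ->] ->]].
by apply/imfsetP; exists (a + b + c); rewrite ?KD // addrCA.
Qed.

End Torsion.

Section Maximum.
Variables (T : choiceType) (r : T -> T -> Prop).
Hypotheses (r_refl : forall a, r a a) (r_trans : forall a b c, r a b -> r b c -> r a c).

Lemma seq_max y s : {in y :: s &, forall a b, r a b \/ r b a} ->
  exists2 m, m \in y :: s & {in y :: s, forall z, r z m}.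
Proof.
elim: s y => [|z s IHs] y r_total.
  by exists y; rewrite ?mem_head // => _ /[1!inE] /eqP->.
have [m ms m_max] : exists2 m, m \in z :: s & {in z :: s, forall w, r w m}.
  by apply: IHs => a b az bz; apply: r_total; rewrite inE ?az ?bz orbT.
have ms' : m \in [:: y, z & s] by rewrite inE ms orbT.
have [ym|my] := r_total y m (mem_head _ _) ms'.
  by exists m => // w /predU1P[->|/m_max].
exists y; first exact: mem_head.
by move=> w /predU1P[->|/m_max wm] //; apply: r_trans wm my.
Qed.

Lemma fset_max (E : {fset T}) : {in E &, forall a b, r a b \/ r b a} -> E != fset0 ->
  exists2 m, m \in E & {in E, forall z, r z m}.
Proof.
have memE z : (z \in E) = (z \in enum_fset E) by [].
case: (enum_fset E) memE => [|y s] memE r_total.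
  by case/fset0Pn=> z; rewrite memE.
have [|m ms m_max] := @seq_max y s; first by move=> a b; rewrite -!memE; apply: r_total.
by exists m; rewrite ?memE // => z; rewrite memE; apply: m_max.
Qed.

End Maximum.

Lemma leq_mul_cross_bounds c d M N p a b X : (0 < M * N)%N ->
  (c * (M * N) <= d * p ^ 2)%N -> (p * b <= N * X)%N -> (p * a <= M * X)%N ->
  (c * (a * b) <= d * X ^ 2)%N.
Proof.
move=> MN_gt0 cd pb pa; rewrite -(leq_pmul2l MN_gt0).
apply: leq_trans (_ : c * (M * N) * (a * b) <= _)%N; first by rewrite mulnCA mulnA.
by apply: leq_trans (leq_mul cd (leqnn _)) _; have := leq_mul pb pa; nia.
Qed.

Lemma leq_mul_addn_sub1 N e c : (0 < e)%N -> (c <= N)%N ->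
  ((N + e - 1) * c <= N * (e + c - 1))%N.
Proof.
move=> /prednK <- cN; rewrite addnS addSn !subn1 /= mulnDl mulnDr [(N * c)%N]mulnC.
by rewrite addnC leq_add2r mulnC leq_mul2r cN orbT.
Qed.

Lemma AGM_shifted M N : (2 <= M)%N -> (2 <= N)%N ->
  (9 * (M * N) <= 4 * (M + N - 1) ^ 2)%N.
Proof.
move=> /subnK <- /subnK <-; set m := (M - 2)%N; set n := (N - 2)%N.
have -> : (m + 2 + (n + 2) - 1 = m + n + 3)%N by lia.
nia.
Qed.

Section NonTorsionCosets.
Variables (G : zmodType) (x : G).
Hypothesis x_nontorsion : ~ torsion x.
Implicit Types (A B C E F : {fset G}) (y z : G).

Definition same_coset y z : Prop := exists k : int, y - z = x *~ k.

Definition in_one_coset E : Prop := {in E &, forall a b, same_coset a b}.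

Lemma same_coset_refl y : same_coset y y.
Proof. by exists 0; rewrite subrr mulr0z. Qed.

Lemma same_coset_sym y z : same_coset y z -> same_coset z y.
Proof. by case=> k yz; exists (- k); rewrite mulrNz -yz opprB. Qed.

Lemma same_coset_trans y z w : same_coset y z -> same_coset z w -> same_coset y w.
Proof. by case=> k yz [l zw]; exists (k + l); rewrite mulrzDr -yz -zw addrA subrK. Qed.

Lemma same_coset_add y y' z z' :
  same_coset y y' -> same_coset z z' -> same_coset (y + z) (y' + z').
Proof.
by case=> k yy' [l zz']; exists (k + l); rewrite mulrzDr -yy' -zz' opprD addrACA.
Qed.

Lemma sumset_in_one_coset E F :
  in_one_coset E -> in_one_coset F -> in_one_coset (sumset E F).
Proof.
move=> E1 F1 _ _ /sumsetP[a aE [b bF ->]] /sumsetP[a' a'E [b' b'F ->]].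
by apply: same_coset_add; [apply: E1 | apply: F1].
Qed.

Lemma mulrn_nontorsion_eq0 n : x *+ n = 0 -> n = 0%N.
Proof. by case: n => // n xn0; case: x_nontorsion; exists n.+1. Qed.

Definition coset_le y z : Prop := exists n : nat, z = y + x *+ n.

Lemma coset_le_refl y : coset_le y y.
Proof. by exists 0%N; rewrite addr0. Qed.

Lemma coset_le_trans y z w : coset_le y z -> coset_le z w -> coset_le y w.
Proof. by case=> m -> [n ->]; exists (m + n)%N; rewrite mulrnDr addrA. Qed.

Lemma same_coset_le_total y z : same_coset y z -> coset_le y z \/ coset_le z y.
Proof.
case=> -[n|n] yz; [right; exists n | left; exists n.+1].
  by rewrite pmulrn -yz addrC subrK.
move: yz; rewrite NegzE mulrNz -pmulrn => /(congr1 -%R); rewrite opprB opprK => <-.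
by rewrite addrC subrK.
Qed.

Lemma coset_le_addr_eq y y' z z' :
  coset_le y y' -> coset_le z z' -> y + z = y' + z' -> y = y'.
Proof.
case=> k -> [l ->]; rewrite addrACA -mulrnDr -{1}[y + z]addr0 => /addrI/esym.
by move/mulrn_nontorsion_eq0/eqP; rewrite addn_eq0 => /andP[/eqP-> _]; rewrite addr0.
Qed.

Lemma coset_max E : in_one_coset E -> E != fset0 ->
  exists2 m, m \in E & {in E, forall z, coset_le z m}.
Proof.
move=> E1; apply: (@fset_max _ coset_le coset_le_refl coset_le_trans).
by move=> a b aE bE; apply: same_coset_le_total; apply: E1.
Qed.

Lemma card_sumset_one_coset E F : in_one_coset E -> in_one_coset F ->
  E != fset0 -> F != fset0 -> (#|` E| + #|` F| <= #|` sumset E F| + 1)%N.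
Proof.
move=> + F1 + Fn0; have [mF mFF mF_max] := coset_max F1 Fn0.
have [n] := ubnP #|` E|; elim: n => // n IHn in E *; rewrite ltnS => En E1 En0.
have [m mE m_max] := coset_max E1 En0.
have cardE : #|` E| = (#|` E `\ m|).+1 by rewrite (cardfsD1 m) mE.
have [E'0|E'n0] := eqVneq (E `\ m) fset0.
  by rewrite cardE E'0 cardfs0 add1n addn1 ltnS (leq_card_sumsetr _ mE).
have E'1 : in_one_coset (E `\ m) by move=> a b /fsetD1P[_ aE] /fsetD1P[_ bE]; apply: E1.
have E'n : (#|` E `\ m| < n)%N by rewrite -cardE.
have IH := IHn (E `\ m) E'n E'1 E'n0.
(* The sum m + mF of the two maxima is lost when m is removed from E. *)
have : (#|` sumset (E `\ m) F| < #|` sumset E F|)%N.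
  apply: fproper_ltn_card; rewrite fproperE sumsetS ?fsubD1set ?fsubset_refl //=.
  apply/fsubsetPn; exists (m + mF); first exact: mem_sumset.
  apply/sumsetP => -[a /fsetD1P[am aE] [b bF abm]]; move/eqP: am; apply.
  exact: coset_le_addr_eq (m_max a aE) (mF_max b bF) (esym abm).
by rewrite cardE; lia.
Qed.

Definition fiber B b : {fset G} := [fset z in B | `[< same_coset z b >]].

Lemma mem_fiber B b z : (z \in fiber B b) = (z \in B) && `[< same_coset z b >].
Proof. by rewrite !inE. Qed.

Lemma fiber_sub B b : fsubset (fiber B b) B.
Proof. by apply/fsubsetP => z; rewrite mem_fiber => /andP[]. Qed.

Lemma fiberS B B' b : fsubset B B' -> fsubset (fiber B b) (fiber B' b).
Proof.
move/fsubsetP=> sBB'; apply/fsubsetP => z; rewrite !mem_fiber.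
by case/andP=> /sBB'-> ->.
Qed.

Lemma mem_fiber_self B b : b \in B -> b \in fiber B b.
Proof. by move=> bB; rewrite mem_fiber bB; apply/asboolP/same_coset_refl. Qed.

Lemma fiber_in_one_coset B b : in_one_coset (fiber B b).
Proof.
move=> y z; rewrite !mem_fiber => /andP[_ /asboolP yb] /andP[_ /asboolP zb].
exact: same_coset_trans yb (same_coset_sym zb).
Qed.

Lemma card_sumset_fiber_split E B b : in_one_coset E ->
  (#|` sumset E (fiber B b)| + #|` sumset E (B `\` fiber B b)| <= #|` sumset E B|)%N.
Proof.
move=> E1; rewrite -cardfsUI.
have -> : sumset E (fiber B b) `&` sumset E (B `\` fiber B b) = fset0.
  apply/eqP/fset0Pn => -[z]; rewrite inE => /andP[].
  move=> /sumsetP[e1 e1E [b1 b1b ->]] /sumsetP[e2 e2E [b2 /fsetDP[b2B b2b] e12]].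
  case/negP: b2b; rewrite mem_fiber b2B; apply/asboolP.
  move: b1b; rewrite mem_fiber => /andP[_ /asboolP]; apply: same_coset_trans.
  have [k e12k] := E1 _ _ e1E e2E; exists k.
  by rewrite -e12k; apply/eqP; rewrite subr_eq addrAC e12 addrC addKr.
rewrite cardfs0 addn0; apply: fsubset_leq_card; rewrite fsubUset.
by rewrite !sumsetS ?fsubset_refl ?fiber_sub ?fsubsetDl.
Qed.

Lemma card_sumset_fibers E B N : in_one_coset E -> E != fset0 ->
  {in B, forall b, #|` fiber B b| <= N}%N ->
  ((N + #|` E| - 1) * #|` B| <= N * #|` sumset E B|)%N.
Proof.
move=> E1 En0; have [n] := ubnP #|` B|; elim: n => // n IHn in B *; rewrite ltnS => Bn fibN.
have [->|/fset0Pn[b bB]] := eqVneq B fset0; first by rewrite cardfs0 muln0.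
set Bb := fiber B b; set B' := B `\` Bb.
have bBb : b \in Bb := mem_fiber_self bB.
have fibE := card_sumset_one_coset E1 (@fiber_in_one_coset B b) En0 (fset_neq0 bBb).
have cardB : #|` B| = (#|` Bb| + #|` B'|)%N.
  by rewrite cardfsDS ?fiber_sub // subnKC // fsubset_leq_card ?fiber_sub.
have B'n : (#|` B'| < n)%N.
  by move: Bn (fset_neq0 bBb); rewrite cardB -cardfs_gt0; lia.
have fibN' : {in B', forall z, #|` fiber B' z| <= N}%N.
  move=> z /fsetDP[zB _]; apply: leq_trans (fibN z zB).
  exact/fsubset_leq_card/fiberS/fsubsetDl.
have IH := IHn B' B'n fibN'.
have E_gt0 : (0 < #|` E|)%N by rewrite cardfs_gt0.
rewrite cardB mulnDr; apply: leq_trans (leq_add (leq_mul_addn_sub1 E_gt0 (fibN b bB)) IH) _.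
rewrite -mulnDr leq_mul2l (leq_trans _ (card_sumset_fiber_split B b E1)) ?orbT //.
by rewrite leq_add2r leq_subLR [(1 + _)%N]addnC.
Qed.

Lemma largest_fiber B : B != fset0 ->
  exists2 b, b \in B & {in B, forall z, #|` fiber B z| <= #|` fiber B b|}%N.
Proof.
apply: (@fset_max _ (fun z b => #|` fiber B z| <= #|` fiber B b|)%N) => //.
- by move=> a b c; apply: leq_trans.
- by move=> a b _ _; apply/orP/leq_total.
Qed.

Lemma largest_fiber_ge2 A a0 u0 u1 : u0 != u1 -> same_coset u0 u1 ->
  u0 \in A -> u1 \in A -> {in A, forall z, #|` fiber A z| <= #|` fiber A a0|}%N ->
  (2 <= #|` fiber A a0|)%N.
Proof.
move=> u01 u0u1 u0A u1A a0_max; apply: leq_trans (a0_max u0 u0A).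
have <- : #|` [fset u0; u1]| = 2%N by rewrite cardfs2 u01.
apply/fsubset_leq_card/fsubsetP => z.
rewrite !inE => /orP[]/eqP->; rewrite ?u0A ?u1A; apply/asboolP.
  exact: same_coset_refl.
exact: same_coset_sym.
Qed.

Lemma card_sumset_largest_fiber E B C b0 : in_one_coset E -> E != fset0 ->
  {in B, forall z, #|` fiber B z| <= #|` fiber B b0|}%N -> fsubset (sumset E B) C ->
  ((#|` fiber B b0| + #|` E| - 1) * #|` B| <= #|` fiber B b0| * #|` C|)%N.
Proof.
move=> E1 En0 b0_max /fsubset_leq_card EBC.
exact: leq_trans (card_sumset_fibers E1 En0 b0_max) (leq_mul (leqnn _) EBC).
Qed.

Lemma card_sumset_ge_3half A B u0 u1 : u0 != u1 -> same_coset u0 u1 ->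
  u0 \in A -> u1 \in A -> u0 \in B -> u1 \in B ->
  (9 * (#|` A| * #|` B|) <= 4 * #|` sumset A B| ^ 2)%N.
Proof.
move=> u01 u0u1 u0A u1A u0B u1B.
have [a0 a0A a0_max] := largest_fiber (fset_neq0 u0A).
have [b0 b0B b0_max] := largest_fiber (fset_neq0 u0B).
have M2 := largest_fiber_ge2 u01 u0u1 u0A u1A a0_max.
have N2 := largest_fiber_ge2 u01 u0u1 u0B u1B b0_max.
have fibA_neq0 := fset_neq0 (mem_fiber_self a0A).
have fibB_neq0 := fset_neq0 (mem_fiber_self b0B).
have subB : fsubset (sumset (fiber A a0) B) (sumset A B).
  by rewrite sumsetS ?fiber_sub ?fsubset_refl.
have subA : fsubset (sumset (fiber B b0) A) (sumset A B).
  by rewrite sumsetC sumsetS ?fiber_sub ?fsubset_refl.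
have boundB := card_sumset_largest_fiber (@fiber_in_one_coset A a0) fibA_neq0 b0_max subB.
have boundA := card_sumset_largest_fiber (@fiber_in_one_coset B b0) fibB_neq0 a0_max subA.
apply: (leq_mul_cross_bounds _ (AGM_shifted M2 N2)) => //.
  by rewrite muln_gt0 (ltnW M2) (ltnW N2).
by rewrite addnC.
Qed.

Lemma pair_in_one_coset u0 u1 : same_coset u0 u1 -> in_one_coset [fset u0; u1].
Proof.
move=> u0u1 y z; rewrite !inE => /orP[]/eqP-> /orP[]/eqP->;
  by [apply: same_coset_refl | apply: u0u1 | apply: same_coset_sym].
Qed.

Lemma card_sumset_fiber_pair C c0 u0 u1 : u0 != u1 -> same_coset u0 u1 -> c0 \in C ->
  (#|` fiber C c0| < #|` sumset (fiber C c0) [fset u0; u1]|)%N.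
Proof.
move=> u01 u0u1 c0C; have := card_sumset_one_coset (@fiber_in_one_coset C c0)
  (pair_in_one_coset u0u1) (fset_neq0 (mem_fiber_self c0C)) (fset_neq0 (fset21 u0 u1)).
by rewrite cardfs2 u01 addn2 addn1 ltnS.
Qed.

Lemma card_sumset3_largest_fiber A B U a0 b0 u0 u1 : u0 != u1 -> same_coset u0 u1 ->
  u0 \in U -> u1 \in U -> a0 \in A ->
  {in B, forall z, #|` fiber B z| <= #|` fiber B b0|}%N ->
  ((#|` fiber A a0| + #|` fiber B b0|) * #|` B| <=
    #|` fiber B b0| * #|` sumset (sumset A B) U|)%N.
Proof.
move=> u01 u0u1 u0U u1U a0A b0_max; set V := [fset u0; u1].
have lt_fiber := card_sumset_fiber_pair u01 u0u1 a0A.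
have E_gt0 := leq_ltn_trans (leq0n _) lt_fiber.
have En0 : sumset (fiber A a0) V != fset0 by rewrite -cardfs_gt0.
have E1 := sumset_in_one_coset (@fiber_in_one_coset A a0) (pair_in_one_coset u0u1).
have sub : fsubset (sumset (sumset (fiber A a0) V) B) (sumset (sumset A B) U).
  rewrite sumsetAC !sumsetS ?fiber_sub ?fsubset_refl //.
  by apply/fsubsetP => z; rewrite !inE => /orP[]/eqP->.
apply: leq_trans (card_sumset_largest_fiber E1 En0 b0_max sub).
by rewrite leq_mul2r addnC -addnBA ?leq_add2l ?leq_subRL ?add1n ?lt_fiber ?orbT.
Qed.

Lemma card_sumset3_ge_2 A B U u0 u1 : u0 != u1 -> same_coset u0 u1 ->
  A != fset0 -> B != fset0 -> u0 \in U -> u1 \in U ->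
  (4 * (#|` A| * #|` B|) <= #|` sumset (sumset A B) U| ^ 2)%N.
Proof.
move=> u01 u0u1 An0 Bn0 u0U u1U.
have [a0 a0A a0_max] := largest_fiber An0.
have [b0 b0B b0_max] := largest_fiber Bn0.
have boundB := card_sumset3_largest_fiber u01 u0u1 u0U u1U a0A b0_max.
have boundA := card_sumset3_largest_fiber u01 u0u1 u0U u1U b0B a0_max.
rewrite [sumset B A]sumsetC addnC in boundA.
rewrite -[(_ ^ 2)%N]mul1n; apply: leq_mul_cross_bounds boundB boundA.
  by rewrite muln_gt0 !cardfs_gt0 !(fset_neq0 (mem_fiber_self _)).
by rewrite mul1n; apply: nat_AGM2.
Qed.

End NonTorsionCosets.


Lemma exists_nontorsion_diff (G : zmodType) (U : {fset G}) : U != fset0 ->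
  ~ (exists g : G, forall u : G, u \in U -> torsion (u - g)) ->
  exists u0 u1, [/\ u0 \in U, u1 \in U & ~ torsion (u1 - u0)].
Proof.
case/fset0Pn=> u0 u0U not_coset; exists u0.
apply: contra_notP not_coset => all_tors; exists u0 => u uU.
by apply: contra_notP all_tors => u_nt; exists u.
Qed.

Lemma nontorsion_diff_coset (G : zmodType) (u0 u1 : G) : ~ torsion (u1 - u0) ->
  u1 != u0 /\ same_coset (u1 - u0) u1 u0.
Proof.
move=> nt; split; last by exists 1.
by apply: contra_notN nt => /eqP->; exists 1%N; rewrite subrr mul0rn.
Qed.

Section Ratios.
Variable R : realType.

Lemma ler_ratio_sqrt (p q a b L : nat) : (0 < q)%N -> (0 < a)%N -> (0 < b)%N ->
  (p ^ 2 * (a * b) <= q ^ 2 * L ^ 2)%N ->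
  p%:R / q%:R <= L%:R / Num.sqrt (a%:R * b%:R) :> R.
Proof.
move=> q_gt0 a_gt0 b_gt0 pqL.
have ab_gt0 : (0 : R) < a%:R * b%:R by rewrite -natrM ltr0n muln_gt0 a_gt0.
rewrite -ler_sqr ?nnegrE ?divr_ge0 ?sqrtr_ge0 // !expr_div_n sqr_sqrtr ?(ltW ab_gt0) //.
rewrite ler_pdivlMr // mulrAC ler_pdivrMr ?exprn_gt0 ?ltr0n //.
by rewrite -!natrX -!natrM ler_nat [(L ^ 2 * _)%N]mulnC.
Qed.

Lemma inf_eq_min (S : set R) m : S m -> (forall r, S r -> m <= r) -> inf S = m.
Proof.
move=> Sm m_lb; apply/eqP; rewrite eq_le lb_le_inf ?andbT //; last by exists m.
by apply: ge_inf => //; exists m.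
Qed.

End Ratios.

Section Constants.
Variables (R : realType) (G : zmodType).
Implicit Types (A B C U : {fset G}).
Local Open Scope classical_set_scope.

Lemma card_r_gt0 A : A != fset0 -> 0 < card_r R A.
Proof. by rewrite ltr0n cardfs_gt0. Qed.

Lemma card_r_div_sqrt_sqr A : A != fset0 ->
  card_r R A / Num.sqrt (card_r R A * card_r R A) = 1.
Proof. by move=> An0; rewrite sqrtr_sqr gtr0_norm ?divff ?gt_eqF ?card_r_gt0. Qed.

Lemma card_r_sumset_div_sqrt_ge (k : nat) A B C : A != fset0 -> B != fset0 ->
  (k ^ 2 * (#|` A| * #|` B|) <= #|` C| ^ 2)%N ->
  k%:R <= card_r R C / Num.sqrt (card_r R A * card_r R B).
Proof.
move=> An0 Bn0 kC; have := @ler_ratio_sqrt R k 1 #|` A| #|` B| #|` C|.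
by rewrite divr1 exp1n mul1n !cardfs_gt0; apply.
Qed.

Lemma card_r_div_ge1 A C : A != fset0 -> (#|` A| <= #|` C|)%N ->
  1 <= card_r R C / card_r R A.
Proof. by move=> An0 AC; rewrite ler_pdivlMr ?card_r_gt0 // mul1r ler_nat. Qed.

Lemma alpha_eq1 U A : A != fset0 -> fsubset U A ->
  #|` sumset A A| = #|` A| -> alpha R U = 1.
Proof.
move=> An0 UA AA; apply: inf_eq_min => [|_ [A' [B' [A'n0 B'n0 _ _ ->]]]].
  by exists A, A; split; rewrite // /card_r AA card_r_div_sqrt_sqr.
by apply: (@card_r_sumset_div_sqrt_ge 1); rewrite // mul1n card_sumset_sqr.
Qed.

Lemma alpha'_eq1 U A : A != fset0 -> fsubset U A ->
  #|` sumset A A| = #|` A| -> alpha' R U = 1.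
Proof.
move=> An0 UA AA; apply: inf_eq_min => [|_ [A' [B' [A'n0 /fset0Pn[b bB'] _ _ [_ ->]]]]].
  by exists A, A; split; rewrite // /card_r AA divff ?gt_eqF ?card_r_gt0.
exact: card_r_div_ge1 (leq_card_sumsetl _ bB').
Qed.

Lemma alpha''_eq1 U A : A != fset0 -> fsubset U A ->
  #|` sumset A A| = #|` A| -> alpha'' R U = 1.
Proof.
move=> An0 UA AA; apply: inf_eq_min => [|_ [A' [A'n0 _ ->]]].
  by exists A; split; rewrite // /card_r AA divff ?gt_eqF ?card_r_gt0.
by case/fset0Pn: (A'n0) => a aA'; apply: card_r_div_ge1 (leq_card_sumsetl _ aA').
Qed.

Lemma beta_eq1 U K : U != fset0 -> K != fset0 ->
  #|` sumset (sumset K K) U| = #|` K| -> beta R U = 1.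
Proof.
move=> Un0 Kn0 KKU; apply: inf_eq_min => [|_ [A [B [An0 Bn0 ->]]]].
  by exists K, K; split; rewrite // /card_r KKU card_r_div_sqrt_sqr.
by apply: (@card_r_sumset_div_sqrt_ge 1); rewrite // mul1n card_sumset3_sqr.
Qed.

Lemma beta'_eq1 U K : U != fset0 -> K != fset0 ->
  #|` sumset (sumset K K) U| = #|` K| -> beta' R U = 1.
Proof.
move=> Un0 Kn0 KKU; apply: inf_eq_min => [|_ [A [B [An0 Bn0 _ ->]]]].
  by exists K, K; split; rewrite // /card_r KKU card_r_div_sqrt_sqr.
by apply: (@card_r_sumset_div_sqrt_ge 1); rewrite // mul1n card_sumset3_sqr.
Qed.

Lemma beta''_eq1 U K : U != fset0 -> K != fset0 ->
  #|` sumset (sumset K K) U| = #|` K| -> beta'' R U = 1.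
Proof.
move=> /fset0Pn[u uU] Kn0 KKU; apply: inf_eq_min => [|_ [A [/fset0Pn[a aA] ->]]].
  by exists K; split; rewrite // /card_r KKU divff ?gt_eqF ?card_r_gt0.
apply: card_r_div_ge1 (leq_trans (leq_card_sumsetl _ aA) (leq_card_sumsetl _ uU)).
exact: fset_neq0 aA.
Qed.

Lemma beta_ge2 U u0 u1 : ~ torsion (u1 - u0) -> u0 \in U -> u1 \in U -> 2 <= beta R U.
Proof.
move=> nt u0U u1U; have [u10 u1u0] := nontorsion_diff_coset nt.
have Un0 := fset_neq0 u0U.
apply: lb_le_inf => [|_ [A [B [An0 Bn0 ->]]]]; first by eexists; exists U, U.
apply: (@card_r_sumset_div_sqrt_ge 2) => //.
exact (card_sumset3_ge_2 nt u10 u1u0 An0 Bn0 u1U u0U).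
Qed.

Lemma alpha_ge3half U u0 u1 : ~ torsion (u1 - u0) -> u0 \in U -> u1 \in U ->
  3 / 2 <= alpha R U.
Proof.
move=> nt u0U u1U; have [u10 u1u0] := nontorsion_diff_coset nt.
apply: lb_le_inf => [|_ [A [B [An0 Bn0 /fsubsetP UA /fsubsetP UB ->]]]].
  by eexists; exists U, U; split; rewrite ?fsubset_refl // (fset_neq0 u0U).
apply: ler_ratio_sqrt; rewrite ?cardfs_gt0 //.
exact (card_sumset_ge_3half nt u10 u1u0 (UA _ u1U) (UA _ u0U) (UB _ u1U) (UB _ u0U)).
Qed.

End Constants.

Theorem mainTheorem19 (R : realType) (G : zmodType) (U : {fset G}) :
  U != fset0 ->
  ((exists g : G, forall u : G, u \in U -> torsion (u - g)) ->
     [/\ alpha R U = 1, alpha' R U = 1 & alpha'' R U = 1] /\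
     [/\ beta R U = 1, beta' R U = 1 & beta'' R U = 1]) /\
  (~ (exists g : G, forall u : G, u \in U -> torsion (u - g)) ->
     2 <= beta R U /\ 3 / 2 <= alpha R U).
Proof.
move=> Un0; split=> [[g Ug]|not_coset].
  have [K Kmon UgK] := torsion_coset_hull Ug.
  have Kn0 : K != fset0 := fset_neq0 Kmon.1.
  have gKn0 : translate g K != fset0 by rewrite -cardfs_gt0 card_translate cardfs_gt0.
  have gKgK := card_sumset_translate_fsubmonoid g Kmon.
  have KKU := card_sumset3_fsubmonoid Kmon Un0 UgK.
  split; split.
  - exact: alpha_eq1 gKn0 UgK gKgK.
  - exact: alpha'_eq1 gKn0 UgK gKgK.
  - exact: alpha''_eq1 gKn0 UgK gKgK.
  - exact: beta_eq1 Un0 Kn0 KKU.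
  - exact: beta'_eq1 Un0 Kn0 KKU.
  - exact: beta''_eq1 Un0 Kn0 KKU.
have [u0 [u1 [u0U u1U nt]]] := exists_nontorsion_diff Un0 not_coset.
by split; [apply: beta_ge2 nt u0U u1U | apply: alpha_ge3half nt u0U u1U].
Qed.
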